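(* Let $\widehat\delta$ be the nearest representable approximation of the minimum increment angle in the positional encoding, let $C_1,C_2$ be column indices of source positional embeddings and $D_1,D_2$ column indices of target positional embeddings in $X\in\mathbb{R}^{K\times d}$. Then there exists a single transformer layer that simulates the increment operation $X[1,D_1]\leftarrow\sin(\arcsin(X[1,C_1])+\widehat\delta)$, $X[1,D_2]\leftarrow\cos(\arccos(X[1,C_2])+\widehat\delta)$.
   Context: Conventions: rows/columns indexed from $1$; $X[i,j]$ is the $(i,j)$ entry. $\phi(x)=\max\{x,0\}$ entrywise. Hardmax $\sigma$: row $i$ of $\sigma(\Phi)$ is $\frac{1}{|S_i|}\sum_{k\in S_i}e_k$, $S_i=\{k:\Phi_{ik}=\max_j\Phi_{ij}\}$. Positional encoding: $R_{\widehat\delta}=\begin{bmatrix}\cos\widehat\delta&-\sin\widehat\delta\\ \sin\widehat\delta&\cos\widehat\delta\end{bmatrix}$, $p_0=(0,1)^\top$, $p_i=R_{\widehat\delta}^\top p_{i-1}$, position $i$ encoded by $(p_i^{(1)},p_i^{(2)})$. For a weighted hypergraph with incident matrix $A\in\mathbb{R}^{n_v\times n_e}$ ($A_{ij}=w(e_j)$ if vertex $v_i\in e_j$, else $0$) and $K\ge\max\{n_v,n_e\}+1$, the padded incident matrix $\widetilde A\in\mathbb{R}^{K\times K}$ has $\widetilde A_{i+1,j+1}=A_{ij}$, zeros elsewhere. A transformer layer on $X\in\mathbb{R}^{K\times d}$ is $f(X,\widetilde A)=f_{\mathrm{mlp}}(f_{\mathrm{attn}}(X,\widetilde A))$, $f_{\mathrm{attn}}(X,\widetilde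 A)=\sum_{i\in M_A}\psi^{(i)}(X,\widetilde A)+\sum_{i\in M_{A^\top}}\psi^{(i)}(X,\widetilde A^\top)+\sum_{i\in M}\psi^{(i)}(X,I_K)+X$, $\psi(X,B)=B\,\sigma(XW_QW_K^\top X^\top)XW_V$ ($W_Q,W_K\in\mathbb{R}^{d\times2}$, $W_V\in\mathbb{R}^{d\times d}$), $f_{\mathrm{mlp}}(X)=Z^{(4)}W^{(4)}+X$, $Z^{(1)}=X$, $Z^{(j+1)}=\phi(Z^{(j)}W^{(j)})$ ($j=1,2,3$). Storage convention: scalars in the top row of a column (rest $0$), arrays of length $K-1$ in rows $2,\dots,K$; designated columns $B_{\mathrm{global}}$ (top $1$, rest $0$), $B_{\mathrm{local}}$ (top $0$, rest $1$), and scratchpad columns. ''Simulating an operation'' means the layer's weights can be chosen so that applying it to $X$ performs the stated update. *)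

From HB Require Import structures.
From mathcomp Require Import all_boot all_order all_algebra.
From mathcomp Require Import reals trigo.
Set Implicit Arguments. Unset Strict Implicit. Unset Printing Implicit Defensive.
Import Order.TTheory GRing.Theory Num.Theory.
Local Open Scope ring_scope.

Section Transformer.
Variable R : realType.

Definition argmax_set (K : nat) (Phi : 'M[R]_K) (i : 'I_K) : {set 'I_K} :=
  [set k | [forall j, Phi i j <= Phi i k]].

Definition hardmax (K : nat) (Phi : 'M[R]_K) : 'M[R]_K :=
  \matrix_(i, k) (if k \in argmax_set Phi i then (#|argmax_set Phi i|%:R)^-1 else 0).

Definition relu_mx (m n : nat) (X : 'M[R]_(m, n)) : 'M[R]_(m, n) :=
  map_mx (fun x => Num.max x 0) X.

Record head (d : nat) := Head {
  WQ : 'M[R]_(d, 2);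
  WK : 'M[R]_(d, 2);
  WV : 'M[R]_(d, d) }.

Definition psi (K d : nat) (h : head d) (X : 'M[R]_(K, d)) (B : 'M[R]_K) : 'M[R]_(K, d) :=
  B *m hardmax (X *m WQ h *m (WK h)^T *m X^T) *m X *m WV h.

Record mlp (d : nat) := Mlp {
  h1 : nat; h2 : nat; h3 : nat;
  W1 : 'M[R]_(d, h1);
  W2 : 'M[R]_(h1, h2);
  W3 : 'M[R]_(h2, h3);
  W4 : 'M[R]_(h3, d) }.

Definition f_mlp (K d : nat) (m : mlp d) (X : 'M[R]_(K, d)) : 'M[R]_(K, d) :=
  relu_mx (relu_mx (relu_mx (X *m W1 m) *m W2 m) *m W3 m) *m W4 m + X.

Record layer (d : nat) := Layer {
  heads_A : seq (head d);
  heads_AT : seq (head d);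
  heads_I : seq (head d);
  mlp_of : mlp d }.

Definition f_attn (K d : nat) (L : layer d) (X : 'M[R]_(K, d)) (A : 'M[R]_K) : 'M[R]_(K, d) :=
  \sum_(h <- heads_A L) psi h X A
  + \sum_(h <- heads_AT L) psi h X A^T
  + \sum_(h <- heads_I L) psi h X 1%:M
  + X.

Definition apply_layer (K d : nat) (L : layer d) (X : 'M[R]_(K, d)) (A : 'M[R]_K) : 'M[R]_(K, d) :=
  f_mlp (mlp_of L) (f_attn L X A).

(* storage conventions; r1 is the first row *)
Definition scalar_col (K d : nat) (r1 : 'I_K) (X : 'M[R]_(K, d)) (c : 'I_d) : Prop :=
  forall i : 'I_K, i != r1 -> X i c = 0.

Definition global_col (K d : nat) (r1 : 'I_K) (X : 'M[R]_(K, d)) (c : 'I_d) : Prop :=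
  X r1 c = 1 /\ forall i : 'I_K, i != r1 -> X i c = 0.

Definition local_col (K d : nat) (r1 : 'I_K) (X : 'M[R]_(K, d)) (c : 'I_d) : Prop :=
  X r1 c = 0 /\ forall i : 'I_K, i != r1 -> X i c = 1.

End Transformer.

(* The increment is linear in the stored pair: with x = sin θ in column C1 and
   y = cos θ in column C2, the angle-addition formulas give
   sin (θ + δ) = cos δ * x + sin δ * y and cos (θ + δ) = cos δ * y - sin δ * x,
   and for θ in [0, π/2] asin and acos recover θ.  A linear map X ↦ X + X W is
   realised exactly by a ReLU MLP, so a layer without attention heads suffices. *)
From HB Require Import structures.
From mathcomp Require Import all_boot all_order all_algebra.
From mathcomp Require Import reals trigo.
Set Implicit Arguments. Unset Strict Implicit. Unset Printing Implicit Defensive.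
Import Order.TTheory GRing.Theory Num.Theory.
Local Open Scope ring_scope.

Lemma maxr0_subN (R : realDomainType) (x : R) : Num.max x 0 - Num.max (- x) 0 = x.
Proof.
rewrite /Order.max oppr_lt0.
by case: ltgtP => [_ | _ | ->]; rewrite ?sub0r ?opprK ?subr0.
Qed.

Section ColumnWrite.
Variables (R : comPzRingType) (d : nat).
Implicit Types (w : 'cV[R]_d) (D p q : 'I_d).

Lemma mul_cV_delta_mxE m (v : 'cV[R]_m) D i (j : 'I_d) :
  (v *m delta_mx 0 D) i j = if j == D then v i 0 else 0.
Proof.
rewrite mxE (bigD1 0) //= big1 => [|k]; last by rewrite ord1 eqxx.
by rewrite !mxE eqxx /=; case: eqP; rewrite ?mulr1 ?mulr0 addr0.
Qed.

Lemma mulmx_delta_combE K (X : 'M[R]_(K, d)) (a b : R) p q i :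
  (X *m (a *: delta_mx p 0 + b *: delta_mx q 0 : 'cV_d)) i 0 = a * X i p + b * X i q.
Proof. by rewrite mulmxDr -!scalemxAr -!colE !mxE. Qed.

Definition write_cols w1 w2 D1 D2 : 'M[R]_d :=
  (w1 - delta_mx D1 0) *m delta_mx 0 D1 + (w2 - delta_mx D2 0) *m delta_mx 0 D2.

Lemma write_colsE K (X : 'M[R]_(K, d)) w1 w2 D1 D2 i j : D1 != D2 ->
  (X + X *m write_cols w1 w2 D1 D2) i j =
  if j == D1 then (X *m w1) i 0 else if j == D2 then (X *m w2) i 0 else X i j.
Proof.
move=> D12; rewrite /write_cols mulmxDr !mulmxA mxE [in X in _ + X]mxE.
rewrite !mul_cV_delta_mxE !mulmxBr -!colE !mxE.
have [-> | _] := eqVneq j D1; first by rewrite (negbTE D12) addr0 subrKC.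
by have [-> | _] := eqVneq j D2; rewrite add0r ?addr0 // subrKC.
Qed.
End ColumnWrite.

Section LinearLayer.
Variables (R : realType) (d : nat).

Lemma relu_mx_idem m n (M : 'M[R]_(m, n)) : relu_mx (relu_mx M) = relu_mx M.
Proof. by apply/matrixP => i j; rewrite !mxE; apply: max_l; rewrite le_max lexx orbT. Qed.

(* X W is recovered as relu (X W) - relu (- X W); the two middle layers are
   identities, which ReLU leaves unchanged on nonnegative inputs. *)
Definition linear_mlp (W : 'M[R]_d) : mlp R d :=
  @Mlp R d (d + d) (d + d) (d + d) (row_mx W (- W)) 1%:M 1%:M (col_mx 1%:M (- 1%:M)).

Lemma f_mlp_linear K (W : 'M[R]_d) (X : 'M[R]_(K, d)) :
  f_mlp (linear_mlp W) X = X *m W + X.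
Proof.
rewrite /f_mlp /= !mulmx1 !relu_mx_idem mul_mx_row /relu_mx map_row_mx mul_row_col.
rewrite (mulmxN X W) mulmxN !mulmx1; congr (_ + _).
by apply/matrixP => i j; rewrite !mxE; exact: maxr0_subN.
Qed.

Definition mlp_layer (m : mlp R d) : layer R d := Layer [::] [::] [::] m.

Lemma apply_mlp_layer K (m : mlp R d) (X : 'M[R]_(K, d)) (A : 'M[R]_K) :
  apply_layer (mlp_layer m) X A = f_mlp m X.
Proof. by rewrite /apply_layer /f_attn /= !big_nil !add0r. Qed.

End LinearLayer.

Lemma first_quadrant_trigK (R : realType) (t : R) : 0 <= t <= pi / 2 ->
  asin (sin t) = t /\ acos (cos t) = t.
Proof.
case/andP=> t_ge0 t_le; have pi_ge0 : 0 <= pi :> R := pi_ge0 R.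
split; [apply: sinK | apply: cosK]; rewrite in_itv /= ?t_le ?t_ge0 ?andbT //=.
  by apply: le_trans t_ge0; rewrite oppr_le0 divr_ge0.
by apply: le_trans t_le _; rewrite ler_pdivrMr ?ltr0n // ler_peMr ?ler1n.
Qed.

Theorem lemmaC2 (R : realType) (K d : nat) (hK : (0 < K)%N) (delta : R)
  (C1 C2 D1 D2 Bg Bl : 'I_d) (hD : D1 != D2) :
  let r1 := Ordinal hK in
  exists L : layer R d,
    forall (X : 'M[R]_(K, d)) (A : 'M[R]_K),
      global_col r1 X Bg -> local_col r1 X Bl ->
      scalar_col r1 X C1 -> scalar_col r1 X C2 ->
      scalar_col r1 X D1 -> scalar_col r1 X D2 ->
      (exists theta : R, 0 <= theta <= pi / 2 /\
          X r1 C1 = sin theta /\ X r1 C2 = cos theta) ->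
      let Y := apply_layer L X A in
      [/\ Y r1 D1 = sin (asin (X r1 C1) + delta),
          Y r1 D2 = cos (acos (X r1 C2) + delta) &
          forall (i : 'I_K) (j : 'I_d),
            ~ (i = r1 /\ j = D1) -> ~ (i = r1 /\ j = D2) -> Y i j = X i j].
Proof.
move=> r1.
pose w1 : 'cV[R]_d := cos delta *: delta_mx C1 0 + sin delta *: delta_mx C2 0.
pose w2 : 'cV[R]_d := cos delta *: delta_mx C2 0 + (- sin delta) *: delta_mx C1 0.
exists (mlp_layer (linear_mlp (write_cols w1 w2 D1 D2))).
move=> X A _ _ sC1 sC2 sD1 sD2 [t [t_range [XC1 XC2]]] Y.
have YE i j : Y i j =
    if j == D1 then cos delta * X i C1 + sin delta * X i C2
    else if j == D2 then cos delta * X i C2 - sin delta * X i C1 else X i j.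
  by rewrite /Y apply_mlp_layer f_mlp_linear addrC write_colsE // !mulmx_delta_combE mulNr.
have [asinK acosK] := first_quadrant_trigK t_range.
split.
- by rewrite YE eqxx XC1 XC2 asinK sinD [cos delta * _]mulrC [sin delta * _]mulrC.
- by rewrite YE eq_sym (negbTE hD) eqxx XC1 XC2 acosK cosD [cos delta * _]mulrC [sin delta * _]mulrC.
- move=> i j not_D1 not_D2; rewrite YE.
  have [j_D1 | _] := eqVneq j D1.
    have i_r1 : i != r1 by apply/eqP => i_r1; apply: not_D1.
    by rewrite j_D1 (sC1 i i_r1) (sC2 i i_r1) (sD1 i i_r1) !mulr0 addr0.
  have [j_D2 | //] := eqVneq j D2.
  have i_r1 : i != r1 by apply/eqP => i_r1; apply: not_D2.
  by rewrite j_D2 (sC1 i i_r1) (sC2 i i_r1) (sD2 i i_r1) !mulr0 subr0.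
Qed.
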